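(* Let $F_n$ be a probability distribution function on $\mathbb{R}$, $X\sim F_n$, with $\varepsilon_n:=F_n(0)>0$, $\mathbb{E}_{F_n}[X]\ge\mu>0$, $\mathbb{E}_{F_n}[X^2]\le C$ and $\mathbb{E}_{F_n}[X^2\mid X\le0]\le K$. Let $G_n(y)=\int_{-\infty}^{y}(x^2-yx)\,dF_n(x)$, let $y_n^*\ge0$ satisfy $G_n(y_n^* )=0$, let $D=C/\mu$, and let $$R_n=\mathbb{E}_{F_n}[X^2;\,X\le0]+y_n^*\,\mathbb{E}_{F_n}[|X|;\,X\le0].$$ Then $R_n\le(K+D\sqrt K)\,\varepsilon_n$.
   Context: $\mathbb{E}_{F_n}[Y;\,A]$ denotes $\mathbb{E}_{F_n}[Y\mathbf{1}_A]$. *)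

From HB Require Import structures.
From mathcomp Require Import all_boot all_order all_algebra.
From mathcomp Require Import all_classical all_reals all_analysis.
Set Implicit Arguments. Unset Strict Implicit. Unset Printing Implicit Defensive.
Import Order.TTheory GRing.Theory Num.Theory.
Local Open Scope classical_set_scope.
Local Open Scope ring_scope.
Local Open Scope ereal_scope.

(* The distribution F_n is represented by its law: a probability measure F on
   the Borel sets of R; F_n(y) = F `]-oo, y]`. *)

Definition Eon (R : realType) (F : probability R R) (A : set R) (f : R -> R)
  : \bar R := \int[F]_(x in A) (f x)%:E.

Definition Econd (R : realType) (F : probability R R) (A : set R) (f : R -> R)
  : \bar R := Eon F A f * ((fine (F A))^-1)%:E.

Definition Gfun (R : realType) (F : probability R R) (y : R) : \bar R :=
  Eon F `]-oo, y] (fun x => (x ^+ 2 - y * x)%R).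

From HB Require Import structures.
From mathcomp Require Import all_boot all_order all_algebra.
From mathcomp Require Import all_classical all_reals all_analysis.
From mathcomp Require Import measurable_realfun lra.
Set Implicit Arguments.
Unset Strict Implicit.
Unset Printing Implicit Defensive.
Import Order.TTheory GRing.Theory Num.Theory.
Local Open Scope classical_set_scope.
Local Open Scope ring_scope.

(* At a root y >= 0 of G the integrand x^2 - y x is nonnegative on {x > y}, so
   E[X^2] >= y E[X] >= y mu, i.e. y <= C / mu = D.  On A = {X <= 0} the pointwise
   bound t |x| <= x^2 + (t/2)^2 integrates to
   t E[|X|; A] <= E[X^2; A] + (t/2)^2 F(A) for every t > 0, and the optimal t gives
   the Cauchy-Schwarz bound E[|X|; A] <= sqrt (E[X^2; A] F(A)) <= sqrt K * F(A).
   Since E[X^2; A] <= K F(A), the two bounds add up to the claim. *)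

Section real_bounds.
Variable R : rcfType.

Lemma mulr_norm_le_sqrD (t x : R) : t * `|x| <= x ^+ 2 + (t / 2) ^+ 2.
Proof.
rewrite -real_normK ?num_real //; have := sqr_ge0 (`|x| - t / 2).
set u := `|x|; nra.
Qed.

Lemma le_sqrt_mul_of_quadratic (a b e : R) : 0 < e ->
  (forall t, 0 < t -> t * b <= a + (t / 2) ^+ 2 * e) -> b <= Num.sqrt (a * e).
Proof.
move=> e_gt0 hb; have [b_le0|b_gt0] := leP b 0; first exact: le_trans (sqrtr_ge0 _).
have [u u_gt0 b_eq] : exists2 u, 0 < u & b = u * e.
  by exists (b / e); rewrite ?divr_gt0 ?divfK ?gt_eqF.
(* the optimal t = 2 b / e *)
have := hb (u * 2); rewrite mulr_gt0 // mulfK ?pnatr_eq0 // => /(_ isT); rewrite b_eq => hquad.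
rewrite -(ger0_norm (ltW (mulr_gt0 u_gt0 e_gt0))) -sqrtr_sqr.
by rewrite ler_sqrt; nra.
Qed.

Lemma moment_combination_le (a b e y D K : R) : 0 < e -> 0 <= y <= D ->
    a <= K * e -> b <= Num.sqrt (a * e) -> a + y * b <= (K + D * Num.sqrt K) * e.
Proof.
move=> e_gt0 /andP[y_ge0 yD] aK bae.
have b_le : b <= Num.sqrt K * e.
  have -> : Num.sqrt K * e = Num.sqrt (e ^+ 2 * K).
    by rewrite sqrtrM ?sqr_ge0 // sqrtr_sqr ger0_norm ?ltW // mulrC.
  apply: (le_trans bae); apply: (@ler_wsqrtr R).
  by rewrite expr2 mulrAC ler_wpM2r ?(ltW e_gt0) // mulrC.
have yb_le : y * b <= D * (Num.sqrt K * e).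
  apply: le_trans (ler_wpM2l y_ge0 b_le) (ler_wpM2r _ yD).
  by rewrite mulr_ge0 ?sqrtr_ge0 ?ltW.
rewrite mulrDl -mulrA; lra.
Qed.

End real_bounds.

Section second_moment.
Variables (R : realType) (F : probability R R).
Hypothesis sqr_integrable : F.-integrable setT (fun x => (x ^+ 2)%:E).

Lemma integrable_id : F.-integrable setT (fun x => x%:E).
Proof.
have one_integrable : F.-integrable setT (fun=> 1%:E).
  exact: finite_measure_integrable_cst.
apply: le_integrable (integrableD _ sqr_integrable one_integrable) => //.
  exact/measurable_EFinP.
move=> x _ /=; rewrite lee_fin [X in _ <= X]ger0_norm ?addr_ge0 ?sqr_ge0 //.
rewrite -real_normK ?num_real //; have := normr_ge0 x; set u := `|x|; nra.
Qed.

Lemma integrable_on_sqr A : measurable A -> F.-integrable A (fun x => (x ^+ 2)%:E).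
Proof. by move=> mA; apply: integrableS sqr_integrable. Qed.

Lemma integrable_on_norm A : measurable A -> F.-integrable A (fun x => `|x|%:E).
Proof. by move=> mA; exact: integrable_norm (integrableS _ mA _ integrable_id). Qed.

Lemma Gfun_root_mean_le y : 0 <= y -> Gfun F y = 0%E ->
  (y%:E * \int[F]_x x%:E <= \int[F]_x (x ^+ 2)%:E)%E.
Proof.
move=> y_ge0 G0; set B := [set` `]-oo, y]].
have mB : measurable B by exact: measurable_itv.
pose g x := (x ^+ 2 - y * x)%:E.
have g_integrable : F.-integrable setT g.
  apply: eq_integrable (integrableD _ sqr_integrable (integrableZl _ (- y) integrable_id)) => //.
  by move=> x _; rewrite /g -EFinM -EFinD mulNr.
have gB_integrable : F.-integrable setT (g \_ B).
  by apply/(integrable_mkcond _ mB); exact: integrableS g_integrable.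
have yx_integrable : F.-integrable setT (fun x => (y%:E * x%:E)%E).
  exact: integrableZl integrable_id.
rewrite -integralZl ?integrable_id // -[leLHS]adde0.
have <- : (\int[F]_x (g \_ B) x = 0)%E by rewrite -integral_mkcond.
rewrite -integralD //; apply: le_integral => //; first exact: integrableD.
move=> x _; rewrite patchE; case: ifPn => [_|xB].
  by rewrite /g -EFinM -EFinD lee_fin addrC subrK.
have y_lt_x : y < x by move: xB; rewrite notin_setE /B /= in_itv /= => /negP; rewrite -ltNge.
by rewrite adde0 -EFinM lee_fin expr2; nra.
Qed.

Lemma Eon_norm_le A (t : R) : measurable A ->
  (t%:E * Eon F A (fun x => `|x|%R) <=
   Eon F A (fun x => (x ^+ 2)%R) + ((t / 2) ^+ 2)%:E * F A)%E.
Proof.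
move=> mA; have cst_integrable := @finite_measure_integrable_cst _ _ _ F A ((t / 2) ^+ 2) mA.
rewrite /Eon -integralZl ?integrable_on_norm // -integral_cst //.
rewrite -integralD ?integrable_on_sqr //.
apply: le_integral => //; first exact/integrableZl/integrable_on_norm.
  by apply: integrableD => //; exact: integrable_on_sqr.
by move=> x _; rewrite -EFinM -EFinD lee_fin mulr_norm_le_sqrD.
Qed.

End second_moment.

Theorem lemma8 (R : realType) (F : probability R R) (mu C K ystar : R) :
  (0 < F [set` `]-oo, 0%R]])%E ->
  0 < mu ->
  (mu%:E <= \int[F]_x x%:E)%E ->
  (\int[F]_x (x ^+ 2)%:E <= C%:E)%E ->
  (Econd F [set` `]-oo, 0%R]] (fun x => (x ^+ 2)%R) <= K%:E)%E ->
  0 <= ystar ->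
  Gfun F ystar = 0%E ->
  (Eon F [set` `]-oo, 0%R]] (fun x => (x ^+ 2)%R) + ystar%:E * Eon F [set` `]-oo, 0%R]] (fun x => `|x|%R)
    <= ((K + C / mu * Num.sqrt K) * fine (F [set` `]-oo, 0%R]]))%:E)%E.
Proof.
move=> FA_gt0 mu_gt0 mu_le_mean sqr_le_C cond_le_K y_ge0 G0.
set A := [set` `]-oo, 0%R]]; have mA : measurable A by exact: measurable_itv.
have sqr_int : F.-integrable setT (fun x => (x ^+ 2)%:E).
  apply/integrableP; split; first exact/measurable_EFinP/measurable_funX.
  under eq_integral do rewrite gee0_abs ?lee_fin ?sqr_ge0 //.
  by apply: le_lt_trans sqr_le_C _; rewrite ltry.
have y_le_D : ystar <= C / mu.
  rewrite ler_pdivlMr // -lee_fin EFinM; apply: le_trans sqr_le_C.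
  apply: le_trans (Gfun_root_mean_le sqr_int y_ge0 G0).
  by apply: lee_wpmul2l; rewrite ?lee_fin.
have a_fin : Eon F A (fun x => (x ^+ 2)%R) \is a fin_num.
  by apply: integrable_fin_num => //; exact: integrable_on_sqr.
have b_fin : Eon F A (fun x => `|x|%R) \is a fin_num.
  by apply: integrable_fin_num => //; exact: integrable_on_norm.
have e_fin : F A \is a fin_num by exact: fin_num_measure.
move: FA_gt0 cond_le_K (fun t => Eon_norm_le sqr_int t mA).
rewrite /Econd -(fineK a_fin) -(fineK b_fin) -(fineK e_fin) /=.
set a := fine (Eon F A _); set b := fine (Eon F A _); set e := fine (F A).
rewrite !lte_fin !lee_fin => e_gt0; rewrite ler_pdivrMr // => aK quad_b.
apply: moment_combination_le => //; first by rewrite y_ge0.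
by apply: le_sqrt_mul_of_quadratic => // t _; rewrite -lee_fin EFinM EFinD EFinM quad_b.
Qed.
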